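(* Let $p\neq q$ be primes and let $G$ be a finite minimal non-abelian group with $G=PQ$, where $P$ is a cyclic Sylow $p$-subgroup of $G$ and $Q$ is an elementary abelian Sylow $q$-subgroup of $G$ which is a minimal normal subgroup of $G$. Then $\omega(G)=|Q|+1$.
   Context: A minimal non-abelian group is a non-abelian group all of whose proper subgroups are abelian. A subset $X$ of a group $G$ is a set of pairwise non-commuting elements if $xy\neq yx$ for any two distinct $x,y\in X$. For a finite non-abelian group $G$, $\omega(G)$ denotes the maximum cardinality of a set of pairwise non-commuting elements of $G$. *)

From mathcomp Require Import all_boot all_fingroup all_solvable.
Set Implicit Arguments. Unset Strict Implicit. Unset Printing Implicit Defensive.
Local Open Scope group_scope.

Definition minimal_nonabelian (gT : finGroupType) (G : {group gT}) : Prop :=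
  ~~ abelian G /\ forall H : {group gT}, H \proper G -> abelian H.

Definition pairwise_noncommuting (gT : finGroupType) (X : {set gT}) : bool :=
  [forall x in X, forall y in X, (x != y) ==> (x * y != y * x)].

Definition omega (gT : finGroupType) (G : {set gT}) : nat :=
  \max_(X : {set gT} | (X \subset G) && pairwise_noncommuting X) #|X|.

(* Only the abelianness of P and Q matters.  For a in P outside 'C(Q), the
   subgroup 'C_Q[a] is normal in G = PQ, so it is trivial by minimality of Q;
   hence z |-> a ^ z is injective on Q and the class a ^: Q fills the whole
   coset aQ.  Consequently every element of G outside the abelian subgroup
   'C_G(Q) lies in some conjugate P :^ z with z in Q, and these |Q| + 1
   abelian sets each meet a set of pairwise non-commuting elements at most
   once.  Conversely, a ^: Q together with any y in Q^# is pairwise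
   non-commuting, because every a ^ z also centralises no nontrivial
   element of Q. *)
From mathcomp Require Import all_boot all_fingroup all_solvable.
Set Implicit Arguments.
Unset Strict Implicit.
Unset Printing Implicit Defensive.
Local Open Scope group_scope.

Section NoncommutingSets.
Variable gT : finGroupType.
Implicit Types (X A : {set gT}) (x y : gT).

Lemma pairwise_noncommutingP X :
  reflect {in X &, forall x y, commute x y -> x = y} (pairwise_noncommuting X).
Proof.
apply: (iffP forall_inP) => [ncX x y Xx Xy cxy | eqX x Xx].
  have /forall_inP/(_ y Xy)/implyP := ncX x Xx.
  by case: eqVneq => // _ /(_ isT); rewrite cxy eqxx.
apply/forall_inP => y Xy; apply/implyP; apply: contra => /eqP cxy.
by rewrite (eqX x y).
Qed.

Lemma card_noncommuting_abelian X A :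
  pairwise_noncommuting X -> abelian A -> #|X :&: A| <= 1.
Proof.
move=> /pairwise_noncommutingP ncX cAA; apply/card_le1_eqP => x y.
move=> /setIP[Xx Ax] /setIP[Xy Ay]; apply: ncX => //.
exact: (centsP cAA).
Qed.

Lemma card_noncommuting_abelian_cover X (I : finType) (J : {set I})
    (A : I -> {set gT}) :
  pairwise_noncommuting X -> {in J, forall j, abelian (A j)} ->
  #|X :&: \bigcup_(j in J) A j| <= #|J|.
Proof.
move=> ncX cAA; have -> : #|J| = \sum_(j in J) 1 by rewrite sum1_card.
apply: (big_rec2 (fun S n => #|X :&: S| <= n)) => [|j S n Jj leSn].
  by rewrite setI0 cards0.
rewrite setIUr (leq_trans (leq_card_setU _ _)) // leq_add //.
exact: card_noncommuting_abelian (cAA j Jj).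
Qed.

End NoncommutingSets.

Section RegularConjugation.
Variables (gT : finGroupType) (Q : {group gT}).
Implicit Types a z : gT.

Lemma subcent1_conjg a z : z \in Q -> 'C_Q[a ^ z] = 'C_Q[a] :^ z.
Proof. by move=> Qz; rewrite cent1J conjIg conjGid. Qed.

Lemma class_lcoset_regular a :
  a \in 'N(Q) -> 'C_Q[a] = 1 -> a ^: Q = a *: Q.
Proof.
move=> nQa tiQa; apply/eqP; rewrite eqEcard card_lcoset -index_cent1 tiQa.
rewrite indexg1 leqnn andbT; apply/subsetP => _ /imsetP[z Qz ->].
by rewrite mem_lcoset -commgEl commgEr groupM ?memJ_norm ?groupV.
Qed.

Lemma commute_conjg_regular a z :
  a \in 'N(Q) -> 'C_Q[a] = 1 -> z \in Q -> commute a (a ^ z) -> z = 1.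
Proof.
move=> nQa tiQa Qz caz.
have Qk : [~ a, z] \in Q by rewrite commgEr groupM ?memJ_norm ?groupV.
have : [~ a, z] \in 'C_Q[a].
  by rewrite inE Qk commgEl groupM ?groupV ?cent1id //; apply/cent1P.
rewrite tiQa => /set1P/eqP/commgP/commute_sym/cent1P Caz.
by apply/set1gP; rewrite -tiQa inE Qz.
Qed.

End RegularConjugation.

Section AbelianProduct.
Variables (gT : finGroupType) (G P Q : {group gT}).
Hypotheses (minG : minimal_nonabelian G) (defG : G :=: P * Q)
  (cPP : abelian P) (cQQ : abelian Q) (mnQ : minnormal Q G).

Let sPG : P \subset G. Proof. by rewrite defG mulG_subl. Qed.
Let sQG : Q \subset G. Proof. by rewrite defG mulG_subr. Qed.
Let nQG : G \subset 'N(Q). Proof. by case/mingroupP: mnQ => /andP[]. Qed.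

Lemma not_cents_PQ : ~~ (P \subset 'C(Q)).
Proof.
by apply: contra minG.1 => cPQ; rewrite defG abelianM cPP cQQ centsC.
Qed.

Lemma abelian_centQ : abelian 'C_G(Q).
Proof.
apply: minG.2; rewrite properEneq subsetIl andbT.
apply: contra not_cents_PQ => /eqP defC.
by rewrite (subset_trans sPG) // -defC subsetIr.
Qed.

(* 'C_Q[a] is normalised by P and centralised by Q, hence normal in G. *)
Lemma subcent1_minnormal a : a \in P -> a \notin 'C(Q) -> 'C_Q[a] = 1.
Proof.
move=> Pa notCa; apply/eqP; apply: contraR notCa => ntC.
have nCG : G \subset 'N('C_Q[a]).
  rewrite defG mul_subG //.
    rewrite normsI ?(subset_trans sPG nQG) //; apply: subset_trans (normG _).
    by rewrite sub_cent1 (subsetP cPP).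
  by rewrite cents_norm // (subset_trans cQQ) // centS ?subsetIl.
case/mingroupP: mnQ => _ /(_ [group of 'C_Q[a]]) minQ.
by rewrite -sub_cent1 -(minQ _ (subsetIl _ _)) ?subsetIr //= ntC.
Qed.

Lemma conjugates_cover : G \subset 'C_G(Q) :|: \bigcup_(z in Q) P :^ z.
Proof.
apply/subsetP => g Gg; rewrite in_setU inE Gg /=.
have [//|notCg /=] := boolP (g \in 'C(Q)).
have /mulsgP[a b Pa Qb defg] : g \in P * Q by rewrite -defG.
have notCa : a \notin 'C(Q).
  by apply: contra notCg => Ca; rewrite defg groupM // (subsetP cQQ).
have nQa : a \in 'N(Q) by rewrite (subsetP nQG) ?(subsetP sPG).
have : g \in a ^: Q.
  by rewrite class_lcoset_regular ?subcent1_minnormal // defg mem_lcoset mulKg.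
by case/imsetP => z Qz ->; apply/bigcupP; exists z; rewrite ?memJ_conjg.
Qed.

Lemma card_noncommuting_le (X : {set gT}) :
  X \subset G -> pairwise_noncommuting X -> #|X| <= #|Q| + 1.
Proof.
move=> sXG ncX; have sXcover := subset_trans sXG conjugates_cover.
rewrite -(setIidPl sXcover) setIUr addnC (leq_trans (leq_card_setU _ _)) //.
rewrite leq_add ?card_noncommuting_abelian ?abelian_centQ //.
by apply: card_noncommuting_abelian_cover => // z _; rewrite abelianJ.
Qed.

Lemma exists_noncommuting_of_card : exists X : {set gT},
  [/\ X \subset G, pairwise_noncommuting X & #|X| = #|Q| + 1].
Proof.
have [a Pa notCa] := subsetPn not_cents_PQ.
have [y Qy nty] : exists2 y, y \in Q & y != 1.
  by apply/trivgPn; case/mingroupP: mnQ => /andP[].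
have nQa : a \in 'N(Q) by rewrite (subsetP nQG) ?(subsetP sPG).
have tiQa := subcent1_minnormal Pa notCa.
have tiQaz z : z \in Q -> 'C_Q[a ^ z] = 1.
  by move=> Qz; rewrite subcent1_conjg // tiQa conjs1g.
have notCy z : z \in Q -> ~ commute y (a ^ z).
  move=> Qz cyaz; have : y \in 'C_Q[a ^ z] by rewrite inE Qy; apply/cent1P.
  by rewrite tiQaz // => /set1gP/eqP; rewrite (negPf nty).
have notQy : y \notin a ^: Q.
  by apply/imsetP=> -[z Qz eyz]; apply: (notCy z Qz); rewrite -eyz.
exists (y |: a ^: Q); split.
- apply/subsetP => _ /setU1P[-> | /imsetP[z Qz ->]]; first exact: (subsetP sQG).
  exact: groupJ (subsetP sPG a Pa) (subsetP sQG z Qz).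
- apply/pairwise_noncommutingP => u v /setU1P[-> | /imsetP[z Qz ->]].
    by case/setU1P=> [-> // | /imsetP[w Qw ->] /(notCy w Qw)].
  case/setU1P=> [-> /commute_sym/(notCy z Qz) // | /imsetP[w Qw ->]].
  rewrite -(mulKVg z w) conjgM => caw.
  have nQaz : a ^ z \in 'N(Q) := groupJ nQa (subsetP (normG Q) z Qz).
  have Qzw : z^-1 * w \in Q by rewrite groupM ?groupV.
  by rewrite (commute_conjg_regular nQaz (tiQaz z Qz) Qzw caw) conjg1.
- by rewrite cardsU1 notQy class_lcoset_regular // card_lcoset addnC.
Qed.

End AbelianProduct.

Theorem theorem2p5 (gT : finGroupType) (G P Q : {group gT}) (p q : nat) :
  prime p -> prime q -> p != q ->
  minimal_nonabelian G ->
  G :=: P * Q ->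
  P \in 'Syl_p(G) -> cyclic P ->
  Q \in 'Syl_q(G) -> q.-abelem Q -> minnormal Q G ->
  omega G = (#|Q| + 1)%N.
Proof.
move=> _ _ _ minG defG _ cycP _ abelQ mnQ.
have cPP := cyclic_abelian cycP; have cQQ := abelem_abelian abelQ.
apply/eqP; rewrite eqn_leq; apply/andP; split.
  apply/bigmax_leqP => X /andP[sXG ncX].
  exact: card_noncommuting_le minG defG cPP cQQ mnQ X sXG ncX.
have [X [sXG ncX <-]] := exists_noncommuting_of_card minG defG cPP cQQ mnQ.
by apply: leq_bigmax_cond; rewrite sXG.
Qed.
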